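(* Let $v\in[2,m-1]$ and $F\subseteq[m]\setminus\{v\}$. Then $F$ is a lower facet of $C(m,2d+1)\backslash v$ if and only if $F\cup\{y\}$ is a facet of $C([m]_{v+},2d+1)$. Dually, $F$ is an upper facet of $C(m,2d+1)\backslash v$ if and only if $F\cup\{x\}$ is a facet of $C([m]_{v+},2d+1)$.
   Context: For a finite ordered set $V$, a $(2d+1)$-subset $F\subseteq V$ is a facet of the cyclic polytope $C(V,2d+1)$ iff either every $w\in V\setminus F$ has an even number of elements of $F$ above it, or every such $w$ has an odd number (Gale's evenness criterion). Every facet of $C(m,2d+1)$ is uniquely a disjoint union of pairs $\{i,i+1\}$ of consecutive integers together with exactly one of the elements $1$ or $m$. For $v\in[2,m-1]$, the facets of the vertex figure $C(m,2d+1)\backslash v$ are the sets $F\subseteq[m]\setminus\{v\}$ with $F\cup\{v\}$ a facet of $C(m,2d+1)$; such $F$ is a lower facet of $C(m,2d+1)\backslash v$ if in this decomposition of $F\cup\{v\}$ the element $v$ is paired with $v+1$, and an upper facet if $v$ is paired with $v-1$. $[m]_{v+}=\{1,\dots,v-1,x,y,v+1,\dots,m\}$ is the ordered set with $v-1<x<y<v+1$. *)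

From HB Require Import structures.
From mathcomp Require Import all_boot all_order all_algebra.
From mathcomp Require Import finmap.
Set Implicit Arguments. Unset Strict Implicit. Unset Printing Implicit Defensive.
Import Order.TTheory GRing.Theory Num.Theory.
Local Open Scope fset_scope.

(* Facet of the cyclic polytope C(V, k) for a finite ordered set V,
   k = 2d+1, via Gale's evenness criterion (odd-dimensional version):
   F is a k-subset of V and either every w in V\F has an even number of
   elements of F above it, or every such w has an odd number. *)
Definition cyc_facet {disp : Order.disp_t} {T : orderType disp}
    (V F : {fset T}) (k : nat) : Prop :=
  [/\ F `<=` V, #|` F| = k &
      (forall w, w \in V `\` F -> ~~ odd #|` [fset u in F | (w < u)%O]|) \/
      (forall w, w \in V `\` F -> odd #|` [fset u in F | (w < u)%O]|)].

Definition segm (m : nat) : {fset nat} := [fset i | i in iota 1 m].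

Definition pair_decomp (m : nat) (G P : {fset nat}) (e : nat) : Prop :=
  [/\ (e == 1) || (e == m),
      (forall i, i \in P -> i.+1 \notin P),
      e \notin P, e.-1 \notin P &
      G = e |` (P `|` [fset i.+1 | i in P])].

Definition vfig_facet (m d v : nat) (F : {fset nat}) : Prop :=
  F `<=` segm m `\ v /\ cyc_facet (segm m) (v |` F) d.*2.+1.

(* lower facet: in the decomposition of F u {v}, v is paired with v+1 *)
Definition lower_facet (m d v : nat) (F : {fset nat}) : Prop :=
  vfig_facet m d v F /\
  exists P e, pair_decomp m (v |` F) P e /\ v \in P.

(* upper facet: in the decomposition of F u {v}, v is paired with v-1 *)
Definition upper_facet (m d v : nat) (F : {fset nat}) : Prop :=
  vfig_facet m d v F /\
  exists P e, pair_decomp m (v |` F) P e /\ v.-1 \in P.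

(* [m]_{v+} = {1,...,v-1, x, y, v+1, ..., m}, realised inside rat *)
Definition segm_vplus (m v : nat) (x y : rat) : {fset rat} :=
  [fset (i%:R : rat) | i in iota 1 m & i != v] `|` [fset x; y].

Definition natQ (F : {fset nat}) : {fset rat} := [fset (i%:R : rat) | i in F].

(* Write G := v |` F.  If G = {e} ∪ ⋃_(i ∈ P) {i, i+1} is a pair decomposition, the
   number of elements of G above w is [w < e] + 2 #{i ∈ P | w < i} + [w ∈ P]; hence every
   gap of G in [m] has Gale parity [e = m], while v itself has parity [e = m] + [v ∈ P].
   Conversely, removing from G the endpoint forced by its Gale parity leaves a set in which
   every gap has an even number of elements above it, and such a set splits into pairs
   {i, i+1} whose lower ends are its elements with an odd number of elements above them.
   In [m]_{v+}, putting y (resp. x) in place of v changes no count at an integer gap, while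
   the new gap x (resp. y) has 1 + #{u ∈ F | v < u} (resp. #{u ∈ F | v < u}) elements above
   it; comparing parities gives both equivalences. *)

From HB Require Import structures.
From mathcomp Require Import all_boot all_order all_algebra.
From mathcomp Require Import finmap zify.
Set Implicit Arguments. Unset Strict Implicit. Unset Printing Implicit Defensive.
Import Order.TTheory GRing.Theory Num.Theory.
Local Open Scope fset_scope.

(** * Counting the elements above a point *)

Section Above.
Variables (disp : Order.disp_t) (T : orderType disp).
Implicit Types (S A B F V W : {fset T}) (a w : T) (b : bool).

Definition above S w : nat := #|` [fset u in S | (w < u)%O]|.

Definition gale_parity W F b := {in W, forall w, odd (above F w) = b}.

Lemma cyc_facetE V F k :
  cyc_facet V F k <-> [/\ F `<=` V, #|` F| = k & exists b, gale_parity (V `\` F) F b].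
Proof.
split=> -[FV Fk gale]; split=> //.
  by case: gale => h; [exists false | exists true] => w /h; [move/negbTE|].
by case: gale => -[] h; [right | left] => w /h ->.
Qed.

Lemma gale_parity_fset1U a W F b :
  gale_parity (a |` W) F b <-> odd (above F a) = b /\ gale_parity W F b.
Proof.
split=> [gale | [gale_a gale] w]; last by rewrite in_fset1U => /predU1P[-> | /gale].
by split=> [|w wW]; apply: gale; rewrite in_fset1U ?eqxx ?wW ?orbT.
Qed.

Lemma above_fset1U a S w :
  a \notin S -> above (a |` S) w = ((w < a)%O + above S w)%N.
Proof.
move=> aS; rewrite /above; case: ltP => [wa | aw] /=.
  have -> : [fset u in a |` S | (w < u)%O] = a |` [fset u in S | (w < u)%O].
    by apply/fsetP => u; rewrite !inE; case: eqP => // ->; rewrite wa.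
  by rewrite cardfsU1 !inE (negbTE aS).
congr #|` _|; apply/fsetP => u; rewrite !inE.
by case: (eqVneq u a) => //= ->; rewrite ltNge aw !andbF.
Qed.

Lemma above_fsetU A B w :
  [disjoint A & B] -> above (A `|` B) w = (above A w + above B w)%N.
Proof.
move=> AB; rewrite /above -cardfsUI.
have -> : [fset u in A `|` B | (w < u)%O] =
          [fset u in A | (w < u)%O] `|` [fset u in B | (w < u)%O].
  by apply/fsetP => u; rewrite !inE andb_orl.
rewrite disjoint_fsetI0 ?cardfs0 ?addn0 //.
by apply: fdisjointWl (fdisjointWr _ AB); apply/fsubsetP => u; rewrite !inE => /andP[].
Qed.

Lemma eq_above S a a' :
  {in S, forall u, (a < u)%O = (a' < u)%O} -> above S a = above S a'.
Proof.
move=> eq_lt; congr #|` _|; apply/fsetP => u; rewrite !inE.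
by case: (boolP (u \in S)) => //= /eq_lt.
Qed.

Lemma above_eq0 S w : {in S, forall u, (u <= w)%O} -> above S w = 0.
Proof.
move=> le_w; apply/eqP; rewrite cardfs_eq0; apply/eqP/fsetP => u; rewrite !inE.
by case: (boolP (u \in S)) => //= /le_w; rewrite ltNge => ->.
Qed.

End Above.

Lemma above_imfset disp disp' (T : orderType disp) (T' : orderType disp')
    (f : T -> T') (S : {fset T}) (w : T) :
  {mono f : x y / (x <= y)%O} -> above (f @` S) (f w) = above S w.
Proof.
move=> f_mono; have f_inj := inc_inj f_mono.
rewrite /above (_ : [fset u in f @` S | _] = f @` [fset i in S | (w < i)%O]).
  by rewrite card_imfset.
apply/fsetP => u; apply/idP/imfsetP => [| [i /=]]; rewrite !inE.
  case/andP=> /imfsetP[i /= iS ->]; rewrite (leW_mono f_mono) => wi.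
  by exists i; rewrite // !inE iS.
by case/andP=> iS wi ->; rewrite (leW_mono f_mono) wi in_imfset.
Qed.

Lemma gale_parity_imfset disp disp' (T : orderType disp) (T' : orderType disp')
    (f : T -> T') (W F : {fset T}) (F' : {fset T'}) b :
  {in W, forall w, above F' (f w) = above F w} ->
  gale_parity (f @` W) F' b <-> gale_parity W F b.
Proof.
move=> eq_above_f; split=> gale w.
  by move=> wW; rewrite -eq_above_f // gale // in_imfset.
by case/imfsetP => i /= iW ->; rewrite eq_above_f // gale.
Qed.

Lemma imfsetD (K K' : choiceType) (f : K -> K') (A B : {fset K}) :
  injective f -> f @` (A `\` B) = f @` A `\` f @` B.
Proof.
move=> f_inj; apply/fsetP => u; rewrite in_fsetD.
apply/imfsetP/andP => [[i /= iAB ->] | [uB /imfsetP[i /= iA ui]]].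
  by move: iAB; rewrite in_fsetD !(mem_imfset _ _ f_inj) => /andP[].
by exists i => //; rewrite in_fsetD iA andbT; move: uB; rewrite ui (mem_imfset _ _ f_inj).
Qed.

(** * Pair decompositions *)

Lemma mem_segm m i : (i \in segm m) = (0 < i <= m).
Proof. by rewrite /segm inE mem_iota add1n ltnS. Qed.

Section AboveNat.
Implicit Types (m e : nat) (S P G H : {fset nat}).

Lemma above_succ S w : above S w = ((w.+1 \in S) + above S w.+1)%N.
Proof.
have above_gap S' : w.+1 \notin S' -> above S' w = above S' w.+1.
  move=> wS'; apply: eq_above => u uS'; rewrite !ltEnat /= [w < u]leq_eqVlt.
  by case: eqP => // wu; move: wS'; rewrite wu uS'.
case: (boolP (w.+1 \in S)) => [wS | /above_gap //].
rewrite -(fsetD1K wS) !above_fset1U ?in_fsetD1 ?eqxx // !ltEnat /= ltnSn ltnn.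
by rewrite above_gap // in_fsetD1 eqxx.
Qed.

Lemma above0 S : 0 \notin S -> above S 0 = #|` S|.
Proof.
move=> S0; congr #|` _|; apply/fsetP => u; rewrite !inE ltEnat /= lt0n.
by case: (eqVneq u 0) => [-> | _]; rewrite ?(negbTE S0) ?andbT.
Qed.

Lemma above_segm_top m S : S `<=` segm m -> above S m = 0.
Proof.
by move=> Sm; apply: above_eq0 => u /(fsubsetP Sm); rewrite mem_segm => /andP[].
Qed.

Lemma above_succ_imfset P w :
  above [fset i.+1 | i in P] w = ((w \in P) + above P w)%N.
Proof.
by rewrite above_succ (mem_imfset _ _ succn_inj) (@above_imfset _ _ _ _ succn).
Qed.

Lemma pair_decomp_above m G P e w :
  pair_decomp m G P e -> odd (above G w) = (w < e) (+) (w \in P).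
Proof.
case=> _ P_sep eP e1P ->.
have P_disj : [disjoint P & [fset i.+1 | i in P]].
  apply/fdisjointP => i iP; apply/imfsetP => -[j /= jP ij].
  by move: (P_sep j jP); rewrite -ij iP.
have e_succ : e \notin [fset i.+1 | i in P].
  by apply/imfsetP => -[j /= jP ej]; move: e1P; rewrite ej /= jP.
rewrite above_fset1U ?in_fsetU ?negb_or ?eP // above_fsetU // above_succ_imfset.
rewrite ltEnat !oddD !oddb; congr (_ (+) _).
by rewrite addbCA addbb addbF.
Qed.

Lemma ltn_endpoint m e w :
  (e == 1) || (e == m) -> 0 < w <= m -> w != e -> (w < e) = (e == m).
Proof.
move=> /orP[/eqP-> | /eqP->] /andP[w0 wm] we; last by rewrite eqxx ltn_neqAle we.
rewrite ltnNge w0; apply/esym/negbTE; apply: contra we => /eqP m1.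
by subst m; rewrite eqn_leq wm w0.
Qed.

Lemma inner_neq_endpoint m e w : (e == 1) || (e == m) -> 1 < w < m -> w != e.
Proof. by move=> /orP[] /eqP-> /andP[w1 wm]; [rewrite gtn_eqF | rewrite ltn_eqF]. Qed.

Lemma pair_decomp_gale m G P e :
  pair_decomp m G P e -> gale_parity (segm m `\` G) G (e == m).
Proof.
move=> D w; rewrite in_fsetD mem_segm => /andP[wG wm].
have [e1m _ _ _ GE] := D.
have we : w != e by apply: contraNneq wG => ->; rewrite GE in_fset1U eqxx.
rewrite (pair_decomp_above _ D) (ltn_endpoint e1m wm we).
suff /negbTE -> : w \notin P by rewrite addbF.
by apply: contra wG; rewrite GE in_fset1U in_fsetU => ->; rewrite orbT.
Qed.

Lemma pair_decomp_pred_mem m G P e j :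
  pair_decomp m G P e -> j \in G -> j != e -> 0 < j -> (j.-1 \in P) = (j \notin P).
Proof.
case=> _ P_sep _ _ ->; rewrite in_fset1U in_fsetU => /orP[/eqP-> | ].
  by rewrite eqxx.
case/orP => [jP | /imfsetP[i /= iP ->]] _ j0; last by rewrite iP (negbTE (P_sep _ iP)).
rewrite jP; apply/negbTE/negP => j1P.
by move: (P_sep _ j1P); rewrite prednK // jP.
Qed.

Definition pair_starts H := [fset i in H | odd (above H i)].

Section EvenGaps.
Variable H : {fset nat}.
Hypotheses (H0 : 0 \notin H) (H_even : forall w, w \notin H -> ~~ odd (above H w)).

Lemma pair_starts_succ i :
  i \in pair_starts H -> (i.+1 \in H) && (i.+1 \notin pair_starts H).
Proof.
rewrite !inE => /andP[iH]; rewrite above_succ oddD.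
case: (boolP (i.+1 \in H)) => [i1H | /H_even/negbTE-> //] /=.
by case: odd.
Qed.

Lemma pair_starts_pred j : j \in H -> j \notin pair_starts H -> j.-1 \in pair_starts H.
Proof.
case: j => [jH | i i1H]; first by move: H0; rewrite jH.
rewrite !inE i1H /= => even_i1.
have odd_i : odd (above H i) by rewrite above_succ i1H add1n oddS.
by rewrite odd_i andbT; apply: contraLR odd_i => /H_even.
Qed.

Lemma pair_starts_decomp : H = pair_starts H `|` [fset i.+1 | i in pair_starts H].
Proof.
apply/fsetP => j; rewrite in_fsetU; apply/idP/idP => [jH | /orP[]].
- case: (boolP (j \in pair_starts H)) => //= jP; apply/imfsetP.
  exists j.-1; first exact: pair_starts_pred.
  by rewrite prednK // lt0n; apply: contraNneq H0 => <-.
- by rewrite inE => /andP[].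
- by case/imfsetP => i /= /pair_starts_succ /andP[+ _] ->.
Qed.

End EvenGaps.

Section GaleDecomposition.
Variables (m : nat) (G : {fset nat}) (b : bool).
Hypotheses (m_gt1 : 1 < m) (G_sub : G `<=` segm m) (G_odd : odd #|` G|).
Hypothesis G_gale : gale_parity (segm m `\` G) G b.

Let e := if b then m else 1.

Let e_endpoint : (e == 1) || (e == m).
Proof. by rewrite /e; case: b; rewrite eqxx ?orbT. Qed.

Let e_eq_m : (e == m) = b.
Proof. by rewrite /e; case: b; rewrite ?eqxx // eq_sym gtn_eqF. Qed.

Let e_segm : 0 < e <= m.
Proof. by rewrite /e; case: b; rewrite ?leqnn ltnW // ltnW. Qed.

Let zero_notin S : S `<=` segm m -> 0 \notin S.
Proof. by move=> Sm; apply/negP => /(fsubsetP Sm); rewrite mem_segm. Qed.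

Let H_sub : G `\ e `<=` segm m.
Proof. by apply: fsubset_trans G_sub; apply: fsubsetDl. Qed.

Lemma gale_endpoint_mem : e \in G.
Proof.
apply/negPn/negP => eG.
have := G_gale (_ : e \in segm m `\` G); rewrite in_fsetD eG mem_segm e_segm => /(_ isT).
move: eG; rewrite /e; case: b => eG; first by rewrite above_segm_top.
have := above_succ G 0; rewrite (negbTE eG) add0n above0 ?zero_notin //.
by move=> <-; rewrite G_odd.
Qed.

Lemma gale_even_gaps w : w \notin G `\ e -> ~~ odd (above (G `\ e) w).
Proof.
set H := G `\ e.
have GE : G = e |` H by rewrite fsetD1K // gale_endpoint_mem.
have eH : e \notin H by rewrite in_fsetD1 eqxx.
have H_even0 : ~~ odd (above H 0).
  by move: G_odd; rewrite above0 ?zero_notin // GE cardfsU1 eH add1n oddS.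
move=> wH; case: (posnP w) => [-> // | w0].
case: (leqP w m) => [wm | mw]; last first.
  rewrite above_eq0 // => u /(fsubsetP H_sub); rewrite mem_segm leEnat => /andP[_ um].
  exact: leq_trans um (ltnW mw).
case: (eqVneq w e) => [-> | we].
  move: eH; rewrite /e; case: b => eH; first by rewrite above_segm_top.
  by move: H_even0; rewrite above_succ (negbTE eH).
have wG : w \in segm m `\` G by rewrite in_fsetD mem_segm w0 wm GE in_fset1U negb_or we wH.
have := G_gale wG; rewrite GE above_fset1U // oddD ltEnat /=.
rewrite (ltn_endpoint e_endpoint _ we) ?w0 // e_eq_m.
by rewrite oddb => /(congr1 (addb b)); rewrite addKb addbb => ->.
Qed.

Lemma gale_pair_decomp : exists P e, pair_decomp m G P e /\ (e == m) = b.
Proof.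
have H_even := gale_even_gaps.
exists (pair_starts (G `\ e)), e; split => //; split => //.
- by move=> i /(pair_starts_succ H_even) /andP[].
- by rewrite !inE eqxx.
- apply/negP => /(pair_starts_succ H_even) /andP[].
  by rewrite prednK ?in_fsetD1 ?eqxx //; case/andP: e_segm.
- by rewrite -(pair_starts_decomp (zero_notin H_sub) H_even) fsetD1K // gale_endpoint_mem.
Qed.

End GaleDecomposition.

End AboveNat.

(** * Facets of the vertex figure *)

Lemma fset1U_sub_segm m v F : 0 < v <= m -> F `<=` segm m `\ v -> v |` F `<=` segm m.
Proof.
move=> vm FS; apply/fsubsetP => u; rewrite in_fset1U => /predU1P[-> | /(fsubsetP FS)].
  by rewrite mem_segm.
by rewrite in_fsetD1 => /andP[].
Qed.

Lemma vfig_facetE m d v F : 0 < v <= m -> F `<=` segm m `\ v ->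
  vfig_facet m d v F <->
  #|` v |` F| = d.*2.+1 /\ exists b, gale_parity (segm m `\` (v |` F)) (v |` F) b.
Proof.
move=> vm FS; rewrite /vfig_facet cyc_facetE.
have GS := fset1U_sub_segm vm FS.
by split=> [[_ [_ Gk gale]] | [Gk gale]].
Qed.

Lemma vfig_decompE m d v F (c : bool) : 1 < v < m -> F `<=` segm m `\ v ->
  (vfig_facet m d v F /\ exists P e, pair_decomp m (v |` F) P e /\ (v \in P) = c) <->
  #|` v |` F| = d.*2.+1 /\
  exists b, gale_parity (segm m `\` (v |` F)) (v |` F) b /\ odd (above F v) = c (+) b.
Proof.
move=> v_inner FS; have /andP[v1 vm] := v_inner.
have vF : v \notin F by apply/negP => /(fsubsetP FS); rewrite in_fsetD1 eqxx.
have above_v : above (v |` F) v = above F v by rewrite above_fset1U // ltxx.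
have v_segm : 0 < v <= m by rewrite ltnW // ltnW.
have v_lt_endpoint e : (e == 1) || (e == m) -> (v < e) = (e == m).
  by move=> e1m; rewrite (ltn_endpoint e1m v_segm (inner_neq_endpoint e1m v_inner)).
rewrite vfig_facetE //.
split=> [[[Gk _] [P [e [D vP]]]] | [Gk [b [gale odd_v]]]].
  split=> //; exists (e == m); split; first exact: pair_decomp_gale D.
  have [e1m _ _ _ _] := D.
  by rewrite -above_v (pair_decomp_above _ D) vP v_lt_endpoint // addbC.
have GS := fset1U_sub_segm v_segm FS.
have G_odd : odd #|` v |` F| by rewrite Gk /= odd_double.
have [P [e [D eb]]] := gale_pair_decomp (ltn_trans v1 vm) GS G_odd gale.
split; first by split=> //; exists b.
exists P, e; split=> //; have [e1m _ _ _ _] := D.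
move: (pair_decomp_above v D); rewrite above_v odd_v v_lt_endpoint // eb addbC.
by move/addbI.
Qed.

Lemma upper_facetE m d v F : 1 < v < m ->
  upper_facet m d v F <->
  vfig_facet m d v F /\ exists P e, pair_decomp m (v |` F) P e /\ (v \in P) = false.
Proof.
move=> v_inner; have v0 : 0 < v by case/andP: v_inner => /ltnW.
have vG : v \in v |` F by rewrite in_fset1U eqxx.
have pred_mem P e : pair_decomp m (v |` F) P e -> (v.-1 \in P) = (v \notin P).
  move=> D; have [e1m _ _ _ _] := D.
  by rewrite (pair_decomp_pred_mem D vG (inner_neq_endpoint e1m v_inner)).
split=> -[vfig [P [e [D vP]]]]; split=> //; exists P, e; split=> //.
  by apply/negbTE; rewrite -(pred_mem _ _ D).
by rewrite (pred_mem _ _ D) vP.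
Qed.

(** * The ordered set [m]_{v+} *)

Section NearNat.
Local Open Scope ring_scope.
Variables (R : realDomainType) (v : nat) (z : R).
Hypothesis z_near : (v.-1)%:R < z < (v.+1)%:R.

Lemma natr_lt_near j : j != v -> (j%:R < z) = (j < v)%N.
Proof.
case/andP: z_near => z_gt z_lt jv; case: ltnP => [jlt | vj].
  by apply: le_lt_trans z_gt; rewrite ler_nat -ltnS (ltn_predK jlt).
apply/negbTE; rewrite -leNgt; apply/ltW/(lt_le_trans z_lt).
by rewrite ler_nat ltn_neqAle eq_sym jv vj.
Qed.

Lemma near_lt_natr j : j != v -> (z < j%:R) = (v < j)%N.
Proof.
case/andP: z_near => z_gt z_lt jv; case: ltnP => [vj | jle].
  by apply: lt_le_trans z_lt _; rewrite ler_nat.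
apply/negbTE; rewrite -leNgt; apply/ltW/(le_lt_trans _ z_gt).
have jlt : (j < v)%N by rewrite ltn_neqAle jv jle.
by rewrite ler_nat -ltnS (ltn_predK jlt).
Qed.

Lemma near_neq_natr j : j != v -> z != j%:R.
Proof.
move=> jv; case: (ltnP j v) => [jlt | vj].
  by rewrite gt_eqF // natr_lt_near.
by rewrite lt_eqF // near_lt_natr // ltn_neqAle eq_sym jv.
Qed.

End NearNat.

Section VPlus.
Local Open Scope ring_scope.

Lemma natQ_inj : injective (fun i : nat => i%:R : rat).
Proof. by move=> i j /eqP; rewrite eqr_nat => /eqP. Qed.

Lemma natQ_above (S : {fset nat}) i : above (natQ S) i%:R = above S i.
Proof.
by rewrite (@above_imfset _ _ _ _ (fun i : nat => i%:R : rat)) // => j k; rewrite ler_nat.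
Qed.

Lemma near_notin_natQ (v : nat) (z : rat) (A : {fset nat}) :
  (v.-1)%:R < z < (v.+1)%:R -> v \notin A -> z \notin natQ A.
Proof.
move=> zn vA; apply/imfsetP => -[j /= jA zj].
have jv : j != v by apply: contraNneq vA => <-.
by move: (near_neq_natr zn jv); rewrite zj eqxx.
Qed.

Lemma segm_vplusE m v x y : segm_vplus m v x y = natQ (segm m `\ v) `|` [fset x; y].
Proof.
congr (_ `|` _); apply: eq_imfset => // i.
by rewrite /= in_fsetD1 mem_segm inE /= mem_iota add1n ltnS andbC.
Qed.

Lemma vplus_facetE m v (F : {fset nat}) (z z' : rat) k :
  (v.-1)%:R < z < (v.+1)%:R -> (v.-1)%:R < z' < (v.+1)%:R -> z != z' ->
  F `<=` segm m `\ v ->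
  cyc_facet (natQ (segm m `\ v) `|` [fset z; z']) (z |` natQ F) k <->
  #|` v |` F| = k /\
  exists b, gale_parity (segm m `\` (v |` F)) (v |` F) b /\ odd (above F v) = (z' < z) (+) b.
Proof.
move=> zn z'n zz' FS; set S := segm m `\ v.
have vS : v \notin S by rewrite in_fsetD1 eqxx.
have vF : v \notin F by apply: contra vS; apply: (fsubsetP FS).
have [zS z'S] := (near_notin_natQ zn vS, near_notin_natQ z'n vS).
have [zF z'F] := (near_notin_natQ zn vF, near_notin_natQ z'n vF).
have gaps : (natQ S `|` [fset z; z']) `\` (z |` natQ F) = z' |` natQ (segm m `\` (v |` F)).
  have -> : segm m `\` (v |` F) = S `\` F by rewrite fsetDDl.
  rewrite /natQ imfsetD; last exact: natQ_inj.
  apply/fsetP => u; rewrite !(in_fsetD, in_fsetU, in_fset1).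
  case: (eqVneq u z) => [-> | _]; first by rewrite (negbTE zz') (negbTE zS) andbF.
  by case: (eqVneq u z') => [-> | _]; rewrite ?z'F ?orbT ?orbF.
have above_z' : above (z |` natQ F) z' = ((z' < z)%R + above F v)%N.
  rewrite above_fset1U // -natQ_above; congr (_ + _)%N; apply: eq_above => u.
  case/imfsetP => j /= jF ->; have jv : j != v by apply: contraNneq vF => <-.
  by rewrite (near_lt_natr z'n jv) ltr_nat.
have above_natQ : {in segm m `\` (v |` F), forall i,
    above (z |` natQ F) i%:R = above (v |` F) i}.
  move=> i; rewrite in_fsetD in_fset1U negb_or => /andP[/andP[iv _] _].
  by rewrite !above_fset1U // natQ_above (natr_lt_near zn iv).
have card_natQ : #|` z |` natQ F| = #|` v |` F|.
  by rewrite !cardfsU1 zF vF card_imfset //; apply: natQ_inj.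
have sub : z |` natQ F `<=` natQ S `|` [fset z; z'].
  apply/fsubsetP => u; rewrite in_fset1U in_fsetU in_fset2 => /orP[-> | uF].
    by rewrite orbT.
  by apply/orP; left; move: uF; apply/fsubsetP/subset_imfset/fsubsetP.
rewrite cyc_facetE gaps.
split=> [[_ Gk [b /gale_parity_fset1U[odd_z' gale]]] | [Gk [b [gale odd_v]]]].
  split; first by rewrite -card_natQ.
  exists b; split; first exact/(gale_parity_imfset _ above_natQ).
  by rewrite -odd_z' above_z' oddD oddb addKb.
split=> //; first by rewrite card_natQ.
exists b; apply/gale_parity_fset1U; split; last exact/(gale_parity_imfset _ above_natQ).
by rewrite above_z' oddD oddb odd_v addKb.
Qed.

End VPlus.

Theorem lemma4p7 (m d v : nat) (x y : rat) (F : {fset nat}) :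
  2 <= v <= m.-1 ->
  ((v.-1)%:R < x)%R -> (x < y)%R -> (y < (v.+1)%:R)%R ->
  F `<=` segm m `\ v ->
  (lower_facet m d v F <-> cyc_facet (segm_vplus m v x y) (y |` natQ F) d.*2.+1) /\
  (upper_facet m d v F <-> cyc_facet (segm_vplus m v x y) (x |` natQ F) d.*2.+1).
Proof.
move=> /andP[v2 vm] x_gt xy y_lt FS.
have v_inner : 1 < v < m by apply/andP; split; lia.
have x_near : ((v.-1)%:R < x < (v.+1)%:R)%R by rewrite x_gt (lt_trans xy).
have y_near : ((v.-1)%:R < y < (v.+1)%:R)%R by rewrite y_lt (lt_trans x_gt).
rewrite segm_vplusE; split.
  rewrite /lower_facet [[fset x; y]]fsetUC vplus_facetE ?gt_eqF // xy.
  exact (vfig_decompE d true v_inner FS).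
rewrite upper_facetE // vplus_facetE ?lt_eqF // (lt_gtF xy).
exact (vfig_decompE d false v_inner FS).
Qed.
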